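(* Let $n\ge2$ be an integer, $\sigma\ge0$, $R'>0$, and define $a_1=\frac{n}{2R'}$, $a_2=\frac{a_1}{n-1}$, $a_k=\min\big\{(1+\frac1{n-1})a_{k-1},\frac{\sqrt{n(n+\sigma A_{k-1})}}{2R'}\big\}$ for $k\ge3$, where $A_k=\sum_{i=1}^ka_i$. Then for all $k\ge1$, $$A_k\ge\max\Big\{\frac{n-1}{2R'}\Big(1+\frac1{n-1}\Big)^k\mathbb{1}_{k\le k_0},\ \frac{(n-1)^2\sigma}{(4R')^2n}(k-k_0+n-1)^2\mathbb{1}_{k\ge k_0},\ \frac{n(k-K_0+n-1)}{2R'}\mathbb{1}_{k\ge K_0}\Big\},$$ where $\mathbb{1}$ denotes the indicator function, $K_0=\big\lceil\frac{\log n}{\log n-\log(n-1)}\big\rceil$, $k_0=\big\lceil\frac{\log B_{n,\sigma,R'}}{\log n-\log(n-1)}\big\rceil$, and $$B_{n,\sigma,R'}=\frac{\sigma n(n-1)}{4R'}\Big[1+\sqrt{1+\Big(\frac{4R'}{\sigma(n-1)}\Big)^2}\Big]\ge n\max\Big\{1,\frac{\sigma(n-1)}{2R'}\Big\}.$$ *)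

From Stdlib Require Import Reals ZArith.
Open Scope R_scope.

(* Ceiling of a real number: ceil x = - floor (- x), floor y = up y - 1. *)
Definition Rceil (x : R) : Z := (1 - up (- x))%Z.

(* aA n s R' k = (a_k, A_k), with A_0 = 0 and a_0 = 0 (unused). *)
Fixpoint aA (n : nat) (s R' : R) (k : nat) : R * R :=
  match k with
  | O => (0, 0)
  | S k' =>
      let (ap, Ap) := aA n s R' k' in
      let ak :=
        match k' with
        | O => INR n / (2 * R')
        | S O => ap / (INR n - 1)
        | _ => Rmin ((1 + 1 / (INR n - 1)) * ap)
                    (sqrt (INR n * (INR n + s * Ap)) / (2 * R'))
        end in
      (ak, Ap + ak)
  end.

Definition seq_a (n : nat) (s R' : R) (k : nat) : R := fst (aA n s R' k).
Definition seq_A (n : nat) (s R' : R) (k : nat) : R := snd (aA n s R' k).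

(* B_{n,sigma,R'} = sigma n (n-1)/(4R') [1 + sqrt(1 + (4R'/(sigma(n-1)))^2)],
   written as n(n-1)/(4R') [sigma + sqrt(sigma^2 + (4R'/(n-1))^2)], which is
   algebraically identical for sigma > 0 and is the continuous extension
   at sigma = 0. *)
Definition Bconst (n : nat) (s R' : R) : R :=
  INR n * (INR n - 1) / (4 * R') *
    (s + sqrt (s ^ 2 + (4 * R' / (INR n - 1)) ^ 2)).

Definition K0 (n : nat) : Z := Rceil (ln (INR n) / (ln (INR n) - ln (INR n - 1))).
Definition k0 (n : nat) (s R' : R) : Z :=
  Rceil (ln (Bconst n s R') / (ln (INR n) - ln (INR n - 1))).

Definition indic (b : bool) : R := if b then 1 else 0.

From Stdlib Require Import Reals ZArith Lra Lia.
Open Scope R_scope.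

(** Write q = n/(n-1) and b_k = 2R' a_k, so that b_1 = n, b_2 = q and
    b_(k+1) = min (q b_k, sqrt (n (n + sigma A_k))) for k >= 2.  Induction gives
    b_(k+1) >= min (q^k, n): once q^k >= n every step adds at least n/(2R')
    to A, which is the linear bound from K0 on.  The constant B is the
    positive root of x^2 = n^2 + sigma n (n-1) x / (2R'); hence as long as
    q^k <= B the lower bound (n-1) q^(k+1) on 2R' A_(k+1) keeps the square
    root above q^(k+1), so b_(k+1) >= q^k and A grows geometrically up to k0.
    From k0 on, with c = (n-1)^2 sigma / ((4R')^2 n) and m = k - k0 + n - 1,
    the pair of bounds A_k >= c m^2, a_k >= 2 c m propagates: c is chosen so
    that the square-root branch, fed with A_k >= c m^2, is at least q 2 c m,
    and q m >= m + 1 because m >= n - 1. *)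

Lemma Rceil_le_iff (y : R) (z : Z) : (Rceil y <= z)%Z <-> y <= IZR z.
Proof.
  unfold Rceil; destruct (archimed (- y)) as [Hup1 Hup2].
  split; intros H.
  - apply IZR_le in H; rewrite minus_IZR in H; lra.
  - assert (Hlt : (- z < up (- y))%Z) by (apply lt_IZR; rewrite opp_IZR; lra).
    lia.
Qed.

Lemma ln_le_iff (x y : R) : 0 < x -> 0 < y -> ln x <= ln y <-> x <= y.
Proof.
  intros Hx Hy; split; intros H.
  - destruct (Rle_lt_dec x y) as [|Hyx]; [assumption|].
    pose proof (ln_increasing y x Hy Hyx); lra.
  - destruct (Rle_lt_or_eq_dec x y H) as [Hxy| ->]; [|lra].
    left; apply ln_increasing; assumption.
Qed.

Definition ceil_log (q X : R) : Z := Rceil (ln X / ln q).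

Lemma ceil_log_le_iff (q X : R) (k : nat) : 1 < q -> 0 < X ->
  (ceil_log q X <= Z.of_nat k)%Z <-> X <= q ^ k.
Proof.
  intros Hq HX.
  assert (Hlnq : 0 < ln q) by (rewrite <- ln_1; apply ln_increasing; lra).
  unfold ceil_log; rewrite Rceil_le_iff, <- INR_IZR_INZ.
  rewrite <- (ln_le_iff X (q ^ k)), ln_pow by (try apply pow_lt; lra).
  split; intros H.
  - apply (Rmult_le_compat_r (ln q)) in H; [|lra].
    replace (ln X / ln q * ln q) with (ln X) in H by (field; lra); exact H.
  - apply (Rmult_le_reg_r (ln q)); [exact Hlnq|].
    replace (ln X / ln q * ln q) with (ln X) by (field; lra); exact H.
Qed.

Lemma ceil_log_bracket (q X : R) : 1 < q -> 1 < X ->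
  exists p, ceil_log q X = Z.of_nat (S p) /\ q ^ p < X <= q ^ S p.
Proof.
  intros Hq HX.
  assert (Hpos : (1 <= ceil_log q X)%Z).
  { destruct (Z.le_gt_cases 1 (ceil_log q X)) as [|Hle]; [assumption|].
    assert (H0 : (ceil_log q X <= Z.of_nat 0)%Z) by lia.
    rewrite ceil_log_le_iff in H0 by lra; simpl in H0; lra. }
  exists (Z.to_nat (ceil_log q X) - 1)%nat; split; [lia|split].
  - apply Rnot_le_lt; rewrite <- ceil_log_le_iff by lra; lia.
  - apply ceil_log_le_iff; [lra|lra|lia].
Qed.

Lemma sq_le_of_le_pos_root (b c x : R) : 0 <= b -> 0 <= c -> 0 <= x ->
  x <= b + sqrt (b ^ 2 + c) -> x ^ 2 <= 2 * b * x + c.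
Proof.
  intros Hb Hc Hx Hroot.
  pose proof (sqrt_pos (b ^ 2 + c)) as Hu0.
  pose proof (sqrt_sqrt (b ^ 2 + c) ltac:(nra)) as Hu.
  assert (Hbu : b <= sqrt (b ^ 2 + c)) by nra.
  assert (0 <= (sqrt (b ^ 2 + c) - (x - b)) * (sqrt (b ^ 2 + c) + (x - b))) by
    (apply Rmult_le_pos; lra).
  nra.
Qed.

Lemma indic_mul_le (x y : R) (b : bool) : 0 <= y -> (b = true -> x <= y) ->
  x * indic b <= y.
Proof.
  intros Hy Hb; unfold indic; destruct b.
  - rewrite Rmult_1_r; auto.
  - rewrite Rmult_0_r; exact Hy.
Qed.

Lemma nat_offset (j k n : nat) : (Z.of_nat j <= Z.of_nat k)%Z ->
  exists i, k = (j + i)%nat /\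
    IZR (Z.of_nat k - Z.of_nat j + Z.of_nat n - 1) = INR i + INR n - 1.
Proof.
  intros Hjk; exists (k - j)%nat; split; [lia|].
  replace (Z.of_nat k - Z.of_nat j + Z.of_nat n - 1)%Z
    with (Z.of_nat (k - j) + Z.of_nat n - 1)%Z by lia.
  rewrite minus_IZR, plus_IZR, <- !INR_IZR_INZ; reflexivity.
Qed.

Section GrowthBounds.
Variables (n : nat) (s R' : R).

Local Notation N := (INR n).
Local Notation q := (1 + 1 / (INR n - 1)).
Local Notation a := (seq_a n s R').
Local Notation A := (seq_A n s R').
Local Notation B := (Bconst n s R').

Lemma seq_A_S k : A (S k) = A k + a (S k).
Proof. unfold seq_A, seq_a; simpl; destruct (aA n s R' k); reflexivity. Qed.

Lemma seq_a_1 : a 1 = N / (2 * R').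
Proof. reflexivity. Qed.

Lemma seq_A_1 : A 1 = N / (2 * R').
Proof. unfold seq_A; simpl; ring. Qed.

Lemma seq_a_2 : a 2 = a 1 / (N - 1).
Proof. reflexivity. Qed.

Lemma seq_a_SSS k : a (S (S (S k))) =
  Rmin (q * a (S (S k))) (sqrt (N * (N + s * A (S (S k)))) / (2 * R')).
Proof.
  unfold seq_A, seq_a; remember (S (S k)) as m; simpl; subst m.
  destruct (aA n s R' (S (S k))); reflexivity.
Qed.

Hypotheses (hn : (2 <= n)%nat) (hs : 0 <= s) (hR : 0 < R').

Lemma N_ge2 : 2 <= N.
Proof. replace 2 with (INR 2) by (simpl; ring); apply le_INR; exact hn. Qed.

Lemma q_eq : q = N / (N - 1).
Proof. pose proof N_ge2; field; lra. Qed.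

Lemma q_gt1 : 1 < q.
Proof. pose proof N_ge2; assert (0 < 1 / (N - 1)) by (apply Rdiv_lt_0_compat; lra); lra. Qed.

Lemma q_le_N : q <= N.
Proof.
  pose proof N_ge2; assert (1 / (N - 1) <= 1); [|lra].
  apply (Rmult_le_reg_r (N - 1)); [lra|].
  replace (1 / (N - 1) * (N - 1)) with 1 by (field; lra); lra.
Qed.

Lemma ln_q : ln q = ln N - ln (N - 1).
Proof.
  pose proof N_ge2; rewrite q_eq; unfold Rdiv.
  rewrite ln_mult, ln_Rinv; try apply Rinv_0_lt_compat; lra.
Qed.

Lemma K0_eq : K0 n = ceil_log q N.
Proof. unfold K0, ceil_log; rewrite ln_q; reflexivity. Qed.

Lemma k0_eq : k0 n s R' = ceil_log q B.
Proof. unfold k0, ceil_log; rewrite ln_q; reflexivity. Qed.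

Lemma scaled_seq_a_2 : 2 * R' * a 2 = q.
Proof. pose proof N_ge2; rewrite seq_a_2, seq_a_1, q_eq; field; lra. Qed.

Lemma seq_a_ge0 k : 0 <= a k.
Proof.
  pose proof N_ge2; pose proof q_gt1.
  induction k as [|[|[|k]] IH].
  - unfold seq_a; simpl; lra.
  - rewrite seq_a_1; left; apply Rdiv_lt_0_compat; lra.
  - rewrite seq_a_2, seq_a_1; left.
    apply Rdiv_lt_0_compat; [apply Rdiv_lt_0_compat|]; lra.
  - rewrite seq_a_SSS; apply Rmin_glb; [nra|].
    unfold Rdiv; apply Rmult_le_pos; [apply sqrt_pos|].
    left; apply Rinv_0_lt_compat; lra.
Qed.

Lemma seq_A_ge0 k : 0 <= A k.
Proof.
  induction k as [|k IH].
  - unfold seq_A; simpl; lra.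
  - rewrite seq_A_S; pose proof (seq_a_ge0 (S k)); lra.
Qed.

Lemma seq_a_succ_ge k y : (2 <= k)%nat -> 0 <= y ->
  y <= q * (2 * R' * a k) -> y ^ 2 <= N * (N + s * A k) -> y <= 2 * R' * a (S k).
Proof.
  intros Hk Hy Hgeo Hsqrt; destruct k as [|[|k]]; [lia|lia|].
  rewrite seq_a_SSS.
  replace y with (2 * R' * (y / (2 * R'))) by (field; lra).
  apply Rmult_le_compat_l; [lra|]; apply Rmin_glb.
  - apply (Rmult_le_reg_l (2 * R')); [lra|].
    replace (2 * R' * (y / (2 * R'))) with y by (field; lra); lra.
  - apply Rmult_le_compat_r; [left; apply Rinv_0_lt_compat; lra|].
    rewrite <- (sqrt_pow2 y Hy); apply sqrt_le_1_alt; exact Hsqrt.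
Qed.


Lemma Bconst_root :
  B = N * (N - 1) / (4 * R') * s + sqrt ((N * (N - 1) / (4 * R') * s) ^ 2 + N ^ 2).
Proof.
  pose proof N_ge2; unfold Bconst.
  set (K := N * (N - 1) / (4 * R')).
  assert (HK : 0 <= K) by (left; apply Rdiv_lt_0_compat; nra).
  replace ((K * s) ^ 2 + N ^ 2) with (K ^ 2 * (s ^ 2 + (4 * R' / (N - 1)) ^ 2))
    by (unfold K; field; lra).
  rewrite sqrt_mult_alt, sqrt_pow2 by nra; ring.
Qed.

Lemma Bconst_lb :
  N + N * (N - 1) / (4 * R') * s <= B /\ 2 * (N * (N - 1) / (4 * R') * s) <= B.
Proof.
  pose proof N_ge2; rewrite Bconst_root.
  set (b := N * (N - 1) / (4 * R') * s).
  assert (Hb : 0 <= b) by (unfold b; apply Rmult_le_pos; [left; apply Rdiv_lt_0_compat|]; nra).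
  pose proof (sqrt_pos (b ^ 2 + N ^ 2)).
  pose proof (sqrt_sqrt (b ^ 2 + N ^ 2) ltac:(nra)).
  split; nra.
Qed.

Lemma Bconst_ge : B >= N * Rmax 1 (s * (N - 1) / (2 * R')).
Proof.
  pose proof N_ge2; destruct Bconst_lb as [HN Hs].
  assert (0 <= N * (N - 1) / (4 * R') * s)
    by (apply Rmult_le_pos; [left; apply Rdiv_lt_0_compat|]; nra).
  apply Rle_ge; unfold Rmax; destruct (Rle_dec _ _).
  - replace (N * (s * (N - 1) / (2 * R'))) with (2 * (N * (N - 1) / (4 * R') * s))
      by (field; lra); exact Hs.
  - lra.
Qed.

Lemma Bconst_ge_N : N <= B.
Proof.
  pose proof N_ge2; pose proof Bconst_ge.
  pose proof (Rmax_l 1 (s * (N - 1) / (2 * R'))); nra.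
Qed.

Lemma Bconst_sq_le x : 0 <= x -> x <= B ->
  x ^ 2 <= N * (N + s * ((N - 1) * x / (2 * R'))).
Proof.
  intros Hx HxB; pose proof N_ge2.
  rewrite Bconst_root in HxB; apply sq_le_of_le_pos_root in HxB; try nra.
  - replace (N * (N + s * ((N - 1) * x / (2 * R'))))
      with (2 * (N * (N - 1) / (4 * R') * s) * x + N ^ 2) by (field; lra).
    exact HxB.
  - apply Rmult_le_pos; [left; apply Rdiv_lt_0_compat|]; nra.
Qed.

Lemma seq_a_ge_min k : Rmin (q ^ k) N <= 2 * R' * a (S k).
Proof.
  pose proof N_ge2; pose proof q_gt1.
  induction k as [|[|k] IH].
  - rewrite seq_a_1; replace (2 * R' * (N / (2 * R'))) with N by (field; lra).
    apply Rmin_r.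
  - rewrite scaled_seq_a_2, pow_1; apply Rmin_l.
  - assert (Hmin : 0 <= Rmin (q ^ S (S k)) N)
      by (apply Rmin_glb; [apply pow_le|]; lra).
    pose proof (Rmin_r (q ^ S (S k)) N).
    assert (0 <= s * A (S (S k))) by (apply Rmult_le_pos; [lra|apply seq_A_ge0]).
    apply seq_a_succ_ge; [lia|exact Hmin| |nra].
    apply Rle_trans with (q * Rmin (q ^ S k) N); [|apply Rmult_le_compat_l; lra].
    unfold Rmin at 2; destruct (Rle_dec (q ^ S k) N).
    + rewrite tech_pow_Rmult; apply Rmin_l.
    + apply Rle_trans with N; [apply Rmin_r|nra].
Qed.

Lemma seq_geometric j : q ^ j <= B ->
  (N - 1) * q ^ S j <= 2 * R' * A (S j) /\ q ^ j <= 2 * R' * a (S j).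
Proof.
  pose proof N_ge2; pose proof q_gt1.
  induction j as [|j IH]; intros Hj.
  - rewrite seq_A_1, seq_a_1, pow_1, q_eq; simpl.
    replace (2 * R' * (N / (2 * R'))) with N by (field; lra).
    split; [right; field|]; lra.
  - assert (Hqj : 0 < q ^ S j) by (apply pow_lt; lra).
    assert (Hmono : q ^ j <= q ^ S j) by (apply Rle_pow; [lra|lia]).
    destruct (IH ltac:(lra)) as [IHA IHa].
    assert (Ha : q ^ S j <= 2 * R' * a (S (S j))).
    { destruct j as [|j].
      - rewrite scaled_seq_a_2, pow_1; lra.
      - assert (HA : (N - 1) * q ^ S (S j) / (2 * R') <= A (S (S j))).
        { apply (Rmult_le_reg_l (2 * R')); [lra|].
          replace (2 * R' * ((N - 1) * q ^ S (S j) / (2 * R')))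
            with ((N - 1) * q ^ S (S j)) by (field; lra).
          exact IHA. }
        apply seq_a_succ_ge; [lia|lra| |].
        + rewrite <- tech_pow_Rmult; apply Rmult_le_compat_l; lra.
        + apply Rle_trans with (1 := Bconst_sq_le (q ^ S (S j)) ltac:(lra) Hj).
          apply Rmult_le_compat_l; [lra|].
          apply Rplus_le_compat_l, Rmult_le_compat_l; assumption. }
    split; [|exact Ha].
    rewrite seq_A_S.
    replace ((N - 1) * q ^ S (S j)) with ((N - 1) * q ^ S j + q ^ S j)
      by (rewrite <- (tech_pow_Rmult q (S j)), q_eq; field; lra).
    lra.
Qed.

Lemma seq_linear j i : N <= q ^ j -> 2 * R' * A j + N * INR i <= 2 * R' * A (j + i).
Proof.
  intros Hj; pose proof q_gt1.
  induction i as [|i IH].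
  - rewrite Nat.add_0_r; simpl; lra.
  - rewrite Nat.add_succ_r, seq_A_S, S_INR.
    pose proof (seq_a_ge_min (j + i)) as Ha.
    rewrite Rmin_right in Ha by (apply Rle_trans with (1 := Hj), Rle_pow; lia || lra).
    lra.
Qed.

Local Notation c := ((N - 1) ^ 2 * s / ((4 * R') ^ 2 * N)).

Lemma quad_const_ge0 : 0 <= c.
Proof.
  pose proof N_ge2; unfold Rdiv; apply Rmult_le_pos.
  - apply Rmult_le_pos; [apply pow_le|]; lra.
  - left; apply Rinv_0_lt_compat; nra.
Qed.

Lemma seq_quadratic_step k m : (2 <= k)%nat -> N - 1 <= m ->
  c * m ^ 2 <= A k -> 2 * c * m <= a k ->
  c * (m + 1) ^ 2 <= A (S k) /\ 2 * c * (m + 1) <= a (S k).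
Proof.
  intros Hk Hm HA Ha; pose proof N_ge2; pose proof q_gt1; pose proof quad_const_ge0.
  assert (Hcm : 0 <= 2 * c * m) by (apply Rmult_le_pos; lra).
  assert (Hgrow : 2 * R' * (q * (2 * c * m)) <= 2 * R' * a (S k)).
  { apply seq_a_succ_ge; [exact Hk|apply Rmult_le_pos; nra| |].
    { replace (2 * R' * (q * (2 * c * m))) with (q * (2 * R' * (2 * c * m))) by ring.
      apply Rmult_le_compat_l, Rmult_le_compat_l; lra. }
    replace ((2 * R' * (q * (2 * c * m))) ^ 2) with (N * s * (c * m ^ 2))
      by (rewrite q_eq; field; lra).
    rewrite Rmult_assoc; apply Rmult_le_compat_l; [lra|].
    apply Rle_trans with (s * A k); [apply Rmult_le_compat_l; lra|].
    pose proof (seq_A_ge0 k); nra. }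
  assert (Hqm : m + 1 <= q * m).
  { rewrite q_eq; apply (Rmult_le_reg_r (N - 1)); [lra|].
    replace (N / (N - 1) * m * (N - 1)) with (N * m) by (field; lra); nra. }
  apply Rmult_le_reg_l in Hgrow; [|lra].
  assert (Ha' : 2 * c * (m + 1) <= a (S k)).
  { apply Rle_trans with (2 * c * (q * m)); [apply Rmult_le_compat_l; lra|].
    replace (2 * c * (q * m)) with (q * (2 * c * m)) by ring; exact Hgrow. }
  split; [|exact Ha'].
  rewrite seq_A_S; nra.
Qed.

Lemma seq_quadratic j i : (2 <= j)%nat ->
  c * (N - 1) ^ 2 <= A j -> 2 * c * (N - 1) <= a j ->
  c * (INR i + N - 1) ^ 2 <= A (j + i) /\ 2 * c * (INR i + N - 1) <= a (j + i).
Proof.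
  intros Hj HA Ha; pose proof N_ge2.
  induction i as [|i [IHA IHa]].
  - rewrite Nat.add_0_r; simpl INR; replace (0 + N - 1) with (N - 1) by ring; auto.
  - rewrite Nat.add_succ_r, S_INR.
    replace (INR i + 1 + N - 1) with (INR i + N - 1 + 1) by ring.
    pose proof (pos_INR i).
    apply seq_quadratic_step; [lia|lra|exact IHA|exact IHa].
Qed.

Lemma seq_quadratic_base j : q ^ j <= B <= q ^ S j ->
  c * (N - 1) ^ 2 <= A (S j) /\ 2 * c * (N - 1) <= a (S j).
Proof.
  intros [Hlo Hhi]; pose proof N_ge2; pose proof quad_const_ge0.
  destruct (seq_geometric j Hlo) as [GA Ga].
  destruct Bconst_lb as [_ HBs].
  replace (2 * (N * (N - 1) / (4 * R') * s)) with (8 * R' * N ^ 2 * c / (N - 1))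
    in HBs by (field; lra).
  assert (HBj : 8 * R' * N * c <= q ^ j).
  { rewrite <- tech_pow_Rmult in Hhi; pose proof q_gt1.
    apply (Rmult_le_reg_l q); [lra|].
    replace (q * (8 * R' * N * c)) with (8 * R' * N ^ 2 * c / (N - 1))
      by (rewrite q_eq; field; lra).
    lra. }
  split; apply (Rmult_le_reg_l (2 * R')); try lra.
  - apply Rle_trans with ((N - 1) * q ^ S j); [|exact GA].
    apply Rle_trans with ((N - 1) * (8 * R' * N ^ 2 * c / (N - 1))).
    + replace ((N - 1) * (8 * R' * N ^ 2 * c / (N - 1))) with (2 * R' * (c * (4 * N ^ 2)))
        by (field; lra).
      apply Rmult_le_compat_l, Rmult_le_compat_l; nra.
    + apply Rmult_le_compat_l; lra.
  - apply Rle_trans with (q ^ j); [|exact Ga].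
    apply Rle_trans with (8 * R' * N * c); [|exact HBj].
    replace (8 * R' * N * c) with (2 * R' * (2 * c * (2 * N))) by ring.
    apply Rmult_le_compat_l, Rmult_le_compat_l; lra.
Qed.

Lemma seq_A_ge_geometric k : (1 <= k)%nat -> (Z.of_nat k <= k0 n s R')%Z ->
  (N - 1) / (2 * R') * q ^ k <= A k.
Proof.
  intros Hk Hkk0; destruct k as [|j]; [lia|].
  pose proof N_ge2; pose proof q_gt1; pose proof Bconst_ge_N.
  rewrite k0_eq in Hkk0.
  assert (Hj : q ^ j < B) by (apply Rnot_le_lt; rewrite <- ceil_log_le_iff; [lia|lra|lra]).
  destruct (seq_geometric j ltac:(lra)) as [HA _].
  apply (Rmult_le_reg_l (2 * R')); [lra|].
  replace (2 * R' * ((N - 1) / (2 * R') * q ^ S j)) with ((N - 1) * q ^ S j) by (field; lra).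
  exact HA.
Qed.

Lemma seq_A_ge_linear k : (K0 n <= Z.of_nat k)%Z ->
  N * IZR (Z.of_nat k - K0 n + Z.of_nat n - 1) / (2 * R') <= A k.
Proof.
  intros Hk; pose proof N_ge2; pose proof q_gt1; pose proof Bconst_ge_N.
  rewrite K0_eq in Hk |- *.
  destruct (ceil_log_bracket q N ltac:(lra) ltac:(lra)) as (p & Hp & Hlo & Hhi).
  rewrite Hp in Hk |- *.
  destruct (nat_offset (S p) k n Hk) as (i & -> & ->).
  destruct (seq_geometric p ltac:(lra)) as [HA _].
  pose proof (seq_linear (S p) i Hhi) as Hlin.
  apply (Rmult_le_reg_l (2 * R')); [lra|].
  replace (2 * R' * (N * (INR i + N - 1) / (2 * R'))) with (N * INR i + (N - 1) * N)
    by (field; lra).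
  assert ((N - 1) * N <= (N - 1) * q ^ S p) by (apply Rmult_le_compat_l; lra).
  lra.
Qed.

Lemma seq_A_ge_quadratic k : (k0 n s R' <= Z.of_nat k)%Z ->
  c * IZR (Z.of_nat k - k0 n s R' + Z.of_nat n - 1) ^ 2 <= A k.
Proof.
  intros Hk; pose proof N_ge2; pose proof q_gt1; pose proof q_le_N.
  (* For s > 0 we get B > q, hence k0 >= 2, so the recurrence is in its
     min-form from k0 on; for s = 0 (where k0 may be 1) the bound is 0. *)
  destruct (Rle_lt_or_eq_dec 0 s hs) as [Hs|Hs0].
  2:{ replace c with 0 by (rewrite <- Hs0; unfold Rdiv; ring).
       rewrite Rmult_0_l; apply seq_A_ge0. }
  assert (HqB : q < B).
  { destruct Bconst_lb as [HB _].
    assert (0 < N * (N - 1) / (4 * R') * s)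
      by (apply Rmult_lt_0_compat; [apply Rdiv_lt_0_compat|]; nra).
    lra. }
  rewrite k0_eq in Hk |- *.
  destruct (ceil_log_bracket q B ltac:(lra) ltac:(lra)) as (p & Hp & Hlo & Hhi).
  destruct p as [|j]; [rewrite pow_1 in Hhi; lra|].
  rewrite Hp in Hk |- *.
  destruct (nat_offset (S (S j)) k n Hk) as (i & -> & ->).
  destruct (seq_quadratic_base (S j) (conj (Rlt_le _ _ Hlo) Hhi)) as [HA Ha].
  exact (proj1 (seq_quadratic (S (S j)) i ltac:(lia) HA Ha)).
Qed.

End GrowthBounds.

Theorem lemma7 (n : nat) (s R' : R) (hn : (2 <= n)%nat) (hs : 0 <= s) (hR : 0 < R') :
  Bconst n s R' >= INR n * Rmax 1 (s * (INR n - 1) / (2 * R')) /\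
  forall k : nat, (1 <= k)%nat ->
    seq_A n s R' k >=
      Rmax ((INR n - 1) / (2 * R') * (1 + 1 / (INR n - 1)) ^ k
              * indic (Z.leb (Z.of_nat k) (k0 n s R')))
        (Rmax ((INR n - 1) ^ 2 * s / ((4 * R') ^ 2 * INR n)
                 * (IZR (Z.of_nat k - k0 n s R' + Z.of_nat n - 1)) ^ 2
                 * indic (Z.leb (k0 n s R') (Z.of_nat k)))
              (INR n * IZR (Z.of_nat k - K0 n + Z.of_nat n - 1) / (2 * R')
                 * indic (Z.leb (K0 n) (Z.of_nat k)))).
Proof.
  split; [apply Bconst_ge; assumption|].
  intros k hk; apply Rle_ge.
  assert (HA : 0 <= seq_A n s R' k) by (apply seq_A_ge0; assumption).
  repeat apply Rmax_lub; apply indic_mul_le; try exact HA; intros Hb%Z.leb_le.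
  - apply seq_A_ge_geometric; assumption.
  - apply seq_A_ge_quadratic; assumption.
  - apply seq_A_ge_linear; assumption.
Qed.
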